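(* Let $B$ be a preorder on $\mathcal{SC}$. Then for all $\sigma_1,\sigma_2\in\mathcal{SC}$, $\sigma_1\sqsubseteq_B\sigma_2$ implies $\sigma_1\preceq_B\sigma_2$.
   Context: Fix base types $BT$ with preorder $\leq_{\mathsf b}$ and labels $\mathcal L$. Contract terms: $\sigma::=\mathbf 1\mid ?\mathtt t.\sigma\mid !\mathtt t.\sigma\mid !(\sigma).\sigma\mid ?(\sigma).\sigma\mid \sum_{i\in I}?l_i.\sigma_i\mid \bigoplus_{i\in I}!l_i.\sigma_i\mid \mu x.\sigma\mid x$ ($I$ finite nonempty, labels distinct). $\mathcal{SC}$ = closed guarded terms (guarded: in each $\mu x.\sigma'$, $x$ occurs in $\sigma'$ only under constructors other than $\mu$). $\mathrm{unfold}(\mu x.\sigma')=\mathrm{unfold}(\sigma'[\mu x.\sigma'/x])$, otherwise $\mathrm{unfold}(\sigma)=\sigma$. LTS: $\mathbf 1\xrightarrow\checkmark$; $\lambda.\sigma\xrightarrow\lambda\sigma$ for prefixes (including $!l.\sigma$); $\bigoplus_{i\in I}!l_i.\sigma_i\xrightarrow\tau!l_i.\sigma_i$ for $|I|>1$; $\sum ?l_i.\sigma_i\xrightarrow{?l_i}\sigma_i$; $\mu x.\sigma\xrightarrow\tau\sigma[\mu x.\sigma/x]$. For $B\subseteq\mathcal{SC}^2$: $\lambda_1\bowtie_B\lambda_2$ iff the pair is $(!l,?l)$, $(?l,!l)$, $(!\mathtt t_1,?\mathtt t_2)$ with $\mathtt t_1\leq_{\mathsf b}\mathtt t_2$, $(?\mathtt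 t_1,!\mathtt t_2)$ with $\mathtt t_2\leq_{\mathsf b}\mathtt t_1$, $(!(\sigma_1),?(\sigma_2))$ with $\sigma_1B\sigma_2$, $(?(\sigma_1),!(\sigma_2))$ with $\sigma_2B\sigma_1$. $\rho\|\sigma\xrightarrow\tau_B$ by a $\tau$ of either side, or synchronisation $\rho\xrightarrow{\lambda_1}\rho'$, $\sigma\xrightarrow{\lambda_2}\sigma'$, $\lambda_1\bowtie_B\lambda_2$ giving $\rho'\|\sigma'$. $\dashv_B$: greatest $R$ with $\rho R\sigma$ implying (i) if $\rho\|\sigma$ has no $\xrightarrow\tau_B$ move then $\rho\xrightarrow\checkmark$, $\sigma\xrightarrow\checkmark$; (ii) every $\rho\|\sigma\xrightarrow\tau_B\rho'\|\sigma'$ has $\rho'R\sigma'$. $\sigma_1\sqsubseteq_B\sigma_2$ iff $\forall\rho$, $\rho\dashv_B\sigma_1\Rightarrow\rho\dashv_B\sigma_2$. $\mathcal S(R,B)$ is the set of $(\sigma_1,\sigma_2)$ satisfying all of: if $\mathrm{unfold}(\sigma_1)=\mathbf 1$ then $\mathrm{unfold}(\sigma_2)=\mathbf 1$; if $\mathrm{unfold}(\sigma_1)=?\mathtt t_1.\sigma_1'$ then $\mathrm{unfold}(\sigma_2)=?\mathtt t_2.\sigma_2'$, $\sigma_1'R\sigma_2'$, $\mathtt t_1\leq_{\mathsf b}\mathtt t_2$; if $\mathrm{unfold}(\sigma_1)=!\mathtt t_1.\sigma_1'$ then $\mathrm{unfold}(\sigma_2)=!\mathtt t_2.\sigma_2'$,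 $\sigma_1'R\sigma_2'$, $\mathtt t_2\leq_{\mathsf b}\mathtt t_1$; if $\mathrm{unfold}(\sigma_1)=!(\sigma^m_1).\sigma_1'$ then $\mathrm{unfold}(\sigma_2)=!(\sigma^m_2).\sigma_2'$, $\sigma_1'R\sigma_2'$, $\sigma^m_2B\sigma^m_1$; if $\mathrm{unfold}(\sigma_1)=?(\sigma^m_1).\sigma_1'$ then $\mathrm{unfold}(\sigma_2)=?(\sigma^m_2).\sigma_2'$, $\sigma_1'R\sigma_2'$, $\sigma^m_1B\sigma^m_2$; external sums $\sum_{i\in I}?l_i.\sigma^1_i$ require $\mathrm{unfold}(\sigma_2)=\sum_{j\in J}?l_j.\sigma^2_j$, $I\subseteq J$, $\sigma^1_iR\sigma^2_i$ ($i\in I$); internal sums $\bigoplus_{i\in I}!l_i.\sigma^1_i$ require $\mathrm{unfold}(\sigma_2)=\bigoplus_{j\in J}!l_j.\sigma^2_j$, $J\subseteq I$, $\sigma^1_jR\sigma^2_j$ ($j\in J$). $\preceq_B$ is the greatest $R$ with $R\subseteq\mathcal S(R,B)$. *)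

From Stdlib Require Import List Arith.
Import ListNotations.
Set Implicit Arguments.

Section Contracts.

Context (BT : Type) (leb : BT -> BT -> Prop) (L : Type).

(* Contract terms; variables are names (nat).
   !l.s is the singleton internal sum Int [(l,s)]; ?l.s the singleton Ext. *)
Inductive contract : Type :=
| One : contract
| InT : BT -> contract -> contract
| OutT : BT -> contract -> contract
| OutS : contract -> contract -> contract
| InS : contract -> contract -> contract
| Ext : list (L * contract) -> contract
| Int : list (L * contract) -> contract
| Mu : nat -> contract -> contract
| Var : nat -> contract.

(* s[t/x] (only used with closed t, so no capture) *)
Fixpoint subst (s : contract) (x : nat) (t : contract) : contract :=
  match s with
  | One => One
  | InT b k => InT b (subst k x t)
  | OutT b k => OutT b (subst k x t)
  | OutS m k => OutS (subst m x t) (subst k x t)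
  | InS m k => InS (subst m x t) (subst k x t)
  | Ext l => Ext (map (fun p => (fst p, subst (snd p) x t)) l)
  | Int l => Int (map (fun p => (fst p, subst (snd p) x t)) l)
  | Mu y k => if Nat.eqb y x then Mu y k else Mu y (subst k x t)
  | Var y => if Nat.eqb y x then t else Var y
  end.

Inductive occurs_free (x : nat) : contract -> Prop :=
| of_var : occurs_free x (Var x)
| of_inT b k : occurs_free x k -> occurs_free x (InT b k)
| of_outT b k : occurs_free x k -> occurs_free x (OutT b k)
| of_outS_m m k : occurs_free x m -> occurs_free x (OutS m k)
| of_outS_k m k : occurs_free x k -> occurs_free x (OutS m k)
| of_inS_m m k : occurs_free x m -> occurs_free x (InS m k)
| of_inS_k m k : occurs_free x k -> occurs_free x (InS m k)
| of_ext ls l c : In (l, c) ls -> occurs_free x c -> occurs_free x (Ext ls)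
| of_int ls l c : In (l, c) ls -> occurs_free x c -> occurs_free x (Int ls)
| of_mu y k : y <> x -> occurs_free x k -> occurs_free x (Mu y k).

Definition closed (s : contract) : Prop := forall x, ~ occurs_free x s.

Inductive unguarded (x : nat) : contract -> Prop :=
| ug_var : unguarded x (Var x)
| ug_mu y k : y <> x -> unguarded x k -> unguarded x (Mu y k).

Inductive wf : contract -> Prop :=
| wf_one : wf One
| wf_var x : wf (Var x)
| wf_inT b k : wf k -> wf (InT b k)
| wf_outT b k : wf k -> wf (OutT b k)
| wf_outS m k : wf m -> wf k -> wf (OutS m k)
| wf_inS m k : wf m -> wf k -> wf (InS m k)
| wf_ext ls : ls <> [] -> NoDup (map fst ls) ->
    (forall p, In p ls -> wf (snd p)) -> wf (Ext ls)
| wf_int ls : ls <> [] -> NoDup (map fst ls) ->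
    (forall p, In p ls -> wf (snd p)) -> wf (Int ls)
| wf_mu x k : ~ unguarded x k -> wf k -> wf (Mu x k).

Definition SC (s : contract) : Prop := wf s /\ closed s.

(* unfold as a relation: unfolds s u  iff  unfold(s) = u *)
Inductive unfolds : contract -> contract -> Prop :=
| unf_mu x k u : unfolds (subst k x (Mu x k)) u -> unfolds (Mu x k) u
| unf_other s : (forall x k, s <> Mu x k) -> unfolds s s.

Inductive action : Type :=
| ACheck : action
| ATau : action
| AInT : BT -> action
| AOutT : BT -> action
| AOutS : contract -> action
| AInS : contract -> action
| AInL : L -> action
| AOutL : L -> action.

(* the LTS; the target of the checkmark transition is irrelevant (One) *)
Inductive lts : contract -> action -> contract -> Prop :=
| lts_one : lts One ACheck One
| lts_inT b k : lts (InT b k) (AInT b) k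
| lts_outT b k : lts (OutT b k) (AOutT b) k
| lts_outS m k : lts (OutS m k) (AOutS m) k
| lts_inS m k : lts (InS m k) (AInS m) k
| lts_outL l k : lts (Int [(l, k)]) (AOutL l) k
| lts_int_tau ls l k : 1 < length ls -> In (l, k) ls ->
    lts (Int ls) ATau (Int [(l, k)])
| lts_ext ls l k : In (l, k) ls -> lts (Ext ls) (AInL l) k
| lts_mu x k : lts (Mu x k) ATau (subst k x (Mu x k)).

Section WithB.
Context (B : contract -> contract -> Prop).

Definition bowtie (a1 a2 : action) : Prop :=
  match a1, a2 with
  | AOutL l1, AInL l2 => l1 = l2
  | AInL l1, AOutL l2 => l1 = l2
  | AOutT t1, AInT t2 => leb t1 t2
  | AInT t1, AOutT t2 => leb t2 t1
  | AOutS s1, AInS s2 => B s1 s2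
  | AInS s1, AOutS s2 => B s2 s1
  | _, _ => False
  end.

Inductive par_tau : contract -> contract -> contract -> contract -> Prop :=
| pt_left r s r' : lts r ATau r' -> par_tau r s r' s
| pt_right r s s' : lts s ATau s' -> par_tau r s r s'
| pt_sync r s r' s' a1 a2 :
    lts r a1 r' -> lts s a2 s' -> bowtie a1 a2 -> par_tau r s r' s'.

Definition compliance_sim (R : contract -> contract -> Prop) : Prop :=
  forall r s, R r s ->
    ((~ exists r' s', par_tau r s r' s') ->
       (exists r', lts r ACheck r') /\ (exists s', lts s ACheck s')) /\
    (forall r' s', par_tau r s r' s' -> R r' s').

Definition complies (r s : contract) : Prop :=
  exists R : contract -> contract -> Prop,
    (forall a b, R a b -> SC a /\ SC b) /\ compliance_sim R /\ R r s.

Definition subcontract (s1 s2 : contract) : Prop :=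
  forall r, SC r -> complies r s1 -> complies r s2.

Definition S_fun (R : contract -> contract -> Prop) (s1 s2 : contract) : Prop :=
  forall u1, unfolds s1 u1 ->
  match u1 with
  | One => unfolds s2 One
  | InT t1 k1 => exists t2 k2, unfolds s2 (InT t2 k2) /\ R k1 k2 /\ leb t1 t2
  | OutT t1 k1 => exists t2 k2, unfolds s2 (OutT t2 k2) /\ R k1 k2 /\ leb t2 t1
  | OutS m1 k1 => exists m2 k2, unfolds s2 (OutS m2 k2) /\ R k1 k2 /\ B m2 m1
  | InS m1 k1 => exists m2 k2, unfolds s2 (InS m2 k2) /\ R k1 k2 /\ B m1 m2
  | Ext ls1 => exists ls2, unfolds s2 (Ext ls2) /\
      forall l c1, In (l, c1) ls1 -> exists c2, In (l, c2) ls2 /\ R c1 c2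
  | Int ls1 => exists ls2, unfolds s2 (Int ls2) /\
      forall l c2, In (l, c2) ls2 -> exists c1, In (l, c1) ls1 /\ R c1 c2
  | _ => True
  end.

Definition subcontract_co (s1 s2 : contract) : Prop :=
  exists R : contract -> contract -> Prop,
    (forall a b, R a b -> SC a /\ SC b) /\
    (forall a b, R a b -> S_fun R a b) /\ R s1 s2.

End WithB.

Definition preorder_on_SC (B : contract -> contract -> Prop) : Prop :=
  (forall a b, B a b -> SC a /\ SC b) /\
  (forall a, SC a -> B a a) /\
  (forall a b c, B a b -> B b c -> B a c).

End Contracts.

Arguments One {BT L}.

(* The relation [SC s1 /\ SC s2 /\ s1 [=_B s2] is a post-fixed point of S(-,B). To
   check the clause for the head of unfold(s1), test unfold(s2) with clients that
   perform the complementary action and then behave as an arbitrary client rho of the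
   continuation. Such clients exist, because every session contract is complied with
   by its syntactic dual; since unfold(s2) must satisfy them as well, it offers a
   matching action, and its continuation satisfies every client of the continuation
   of unfold(s1). For an internal sum the test is an external sum over all its labels,
   answering one chosen branch with rho and all the others dually. *)

From Stdlib Require Import List Arith RelationClasses Lia Classical ClassicalEpsilon.
Import ListNotations.
Set Implicit Arguments.

Arguments Var {BT L}.
Arguments ACheck {BT L}.
Arguments ATau {BT L}.
Arguments AInL {BT L}.
Arguments AOutL {BT L}.
Arguments AInT {BT L}.
Arguments AOutT {BT L}.

Section Contracts.
Context (BT : Type) (leb : BT -> BT -> Prop) (L : Type).
Notation C := (contract BT L).

(** * Substitution and well-formedness *)

Definition contract_nested_ind (P : C -> Prop) (H1 : P One)
  (H2 : forall b k, P k -> P (InT b k)) (H3 : forall b k, P k -> P (OutT b k))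
  (H4 : forall m k, P m -> P k -> P (OutS m k)) (H5 : forall m k, P m -> P k -> P (InS m k))
  (H6 : forall ls, (forall p, In p ls -> P (snd p)) -> P (Ext ls))
  (H7 : forall ls, (forall p, In p ls -> P (snd p)) -> P (Int ls))
  (H8 : forall x k, P k -> P (Mu x k)) (H9 : forall x, P (Var x)) : forall s, P s :=
  fix F s := match s with
  | One => H1
  | InT b k => H2 b k (F k)
  | OutT b k => H3 b k (F k)
  | OutS m k => H4 m k (F m) (F k)
  | InS m k => H5 m k (F m) (F k)
  | Ext ls => H6 ls ((fix G (ls : list (L * C)) : forall p, In p ls -> P (snd p) :=
       match ls with
       | [] => fun p H => False_ind _ H
       | q :: ls' => fun p H => match H with
           | or_introl e => eq_ind q (fun p => P (snd p)) (F (snd q)) p e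
           | or_intror H' => G ls' p H' end
       end) ls)
  | Int ls => H7 ls ((fix G (ls : list (L * C)) : forall p, In p ls -> P (snd p) :=
       match ls with
       | [] => fun p H => False_ind _ H
       | q :: ls' => fun p H => match H with
           | or_introl e => eq_ind q (fun p => P (snd p)) (F (snd q)) p e
           | or_intror H' => G ls' p H' end
       end) ls)
  | Mu x k => H8 x k (F k)
  | Var x => H9 x
  end.

Lemma map_branches_id (f : C -> C) (ls : list (L * C)) :
  (forall p, In p ls -> f (snd p) = snd p) -> map (fun p => (fst p, f (snd p))) ls = ls.
Proof.
  intros H. rewrite <- map_id. apply map_ext_in. intros [l c] Hp. simpl. f_equal. exact (H _ Hp).
Qed.

Lemma subst_fresh (k : C) : forall x t, ~ occurs_free x k -> subst k x t = k.
Proof.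
  induction k using contract_nested_ind; intros x0 t Hn; simpl; auto;
  try (f_equal; [apply IHk1 | apply IHk2]; intro H; apply Hn; constructor; auto; fail);
  try (f_equal; apply IHk; intro H; apply Hn; constructor; auto; fail);
  try (f_equal; apply (map_branches_id (fun c => subst c x0 t)); intros [l c] Hp; apply (H (l, c) Hp);
       intro Hc; apply Hn; econstructor; eauto; fail).
  - destruct (Nat.eqb_spec x x0); auto. f_equal. apply IHk. intro H; apply Hn; constructor; auto.
  - destruct (Nat.eqb_spec x x0); auto. subst. exfalso; apply Hn; constructor.
Qed.

Lemma occurs_free_subst (t : C) x y (k : C) : closed t ->
  occurs_free y (subst k x t) -> occurs_free y k /\ y <> x.
Proof.
  intros Ht. induction k using contract_nested_ind; simpl; intro Hf;
  try (inversion Hf; subst; firstorder (constructor; auto); fail);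
  try (inversion Hf; subst; match goal with Hi : In _ (map _ _) |- _ =>
         apply in_map_iff in Hi as [[l' c'] [E Hin]] end;
       simpl in E; inversion E; subst;
       match goal with Hc : occurs_free y _ |- _ =>
         destruct (H _ Hin Hc) as [A Bn] end;
       split; auto; econstructor; eauto; fail).
  - destruct (Nat.eqb_spec x0 x).
    + subst. inversion Hf; subst. split; try constructor; auto.
    + inversion Hf; subst. destruct (IHk H2). split; try constructor; auto.
  - destruct (Nat.eqb_spec x0 x).
    + exfalso. apply (Ht y Hf).
    + inversion Hf; subst. split; try constructor; auto.
Qed.

Lemma unguarded_occurs_free x (k : C) : unguarded x k -> occurs_free x k.
Proof. intros H; induction H; constructor; auto. Qed.

Lemma unguarded_subst (t : C) x y k : closed t -> unguarded y (subst k x t) -> unguarded y k.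
Proof.
  intros Ht. induction k; simpl; intro H; try (inversion H; fail).
  - destruct (Nat.eqb_spec n x); auto. inversion H; subst. constructor; auto.
  - destruct (Nat.eqb_spec n x); auto. exfalso. apply (Ht y). apply unguarded_occurs_free; auto.
Qed.

Lemma map_branches_fst (f : C -> C) (ls : list (L * C)) :
  map fst (map (fun p => (fst p, f (snd p))) ls) = map fst ls.
Proof. rewrite map_map. reflexivity. Qed.

Lemma wf_Ext_map (f : C -> C) (ls : list (L * C)) :
  ls <> [] -> NoDup (map fst ls) -> (forall p, In p ls -> wf (f (snd p))) ->
  wf (Ext (map (fun p => (fst p, f (snd p))) ls)).
Proof.
  intros Hne Hnd Hw. constructor.
  - destruct ls; simpl; congruence.
  - rewrite map_branches_fst. exact Hnd.
  - intros p Hp. apply in_map_iff in Hp as [q [<- Hq]]. exact (Hw q Hq).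
Qed.

Lemma wf_Int_map (f : C -> C) (ls : list (L * C)) :
  ls <> [] -> NoDup (map fst ls) -> (forall p, In p ls -> wf (f (snd p))) ->
  wf (Int (map (fun p => (fst p, f (snd p))) ls)).
Proof.
  intros Hne Hnd Hw. constructor.
  - destruct ls; simpl; congruence.
  - rewrite map_branches_fst. exact Hnd.
  - intros p Hp. apply in_map_iff in Hp as [q [<- Hq]]. exact (Hw q Hq).
Qed.

Lemma wf_subst (t : C) x : wf t -> closed t -> forall k, wf k -> wf (subst k x t).
Proof.
  intros Hw Hc k Hk. induction Hk; simpl; try (constructor; auto; fail).
  - destruct (Nat.eqb_spec x0 x); auto. constructor.
  - apply (wf_Ext_map (fun c => subst c x t)); auto.
  - apply (wf_Int_map (fun c => subst c x t)); auto.
  - destruct (Nat.eqb_spec x0 x); constructor; auto.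
    intro Hu. apply H. eapply unguarded_subst; eauto.
Qed.

Lemma closed_subst_mu x (k : C) : closed (Mu x k) -> closed (subst k x (Mu x k)).
Proof.
  intros Hc y Hy. apply occurs_free_subst in Hy as [A Bn]; auto. apply (Hc y). constructor; auto.
Qed.

Lemma SC_subst_mu x (k : C) : SC (Mu x k) -> SC (subst k x (Mu x k)).
Proof.
  intros [Hw Hc]. inversion Hw; subst. split.
  - apply wf_subst; auto.
  - apply closed_subst_mu; auto.
Qed.

Lemma SC_lts (s : C) a s' : SC s -> lts s a s' -> SC s'.
Proof.
  intros Hs Hl. destruct Hs as [Hw Hc]. destruct Hl.
  - split; auto.
  - inversion Hw; subst. split; auto. intros y Hy; apply (Hc y); constructor; auto.
  - inversion Hw; subst. split; auto. intros y Hy; apply (Hc y); constructor; auto.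
  - inversion Hw; subst. split; auto. intros y Hy; apply (Hc y); apply of_outS_k; auto.
  - inversion Hw; subst. split; auto. intros y Hy; apply (Hc y); apply of_inS_k; auto.
  - inversion Hw as [| | | | | | |ls Hne Hnd Hall|]; subst. split.
    + apply (Hall (l, k)). simpl; auto.
    + intros y Hy. apply (Hc y). econstructor; simpl; eauto.
  - inversion Hw as [| | | | | | |ls' Hne Hnd Hall|]; subst. split.
    + constructor. congruence. simpl. constructor; auto. constructor.
      intros p [<-|[]]. simpl. apply (Hall (l, k)); auto.
    + intros y Hy. inversion Hy; subst. destruct H2 as [E|[]]. inversion E; subst.
      apply (Hc y). econstructor; eauto.
  - inversion Hw as [| | | | | |ls' Hne Hnd Hall| |]; subst. split.
    + apply (Hall (l, k)); auto.
    + intros y Hy. apply (Hc y). econstructor; eauto.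
  - apply SC_subst_mu. split; auto.
Qed.

Lemma SC_One : SC (@One BT L).
Proof. split; [constructor | intros y Hy; inversion Hy]. Qed.

Lemma SC_OutS_msg (m k : C) : SC (OutS m k) -> SC m.
Proof. intros [Hw Hc]. inversion Hw; subst. split; auto. intros y Hy; apply (Hc y); constructor; auto. Qed.

Lemma SC_InS_msg (m k : C) : SC (InS m k) -> SC m.
Proof. intros [Hw Hc]. inversion Hw; subst. split; auto. intros y Hy; apply (Hc y); constructor; auto. Qed.

Lemma SC_prefixes (k : C) : SC k ->
  (forall t, SC (InT t k)) /\ (forall t, SC (OutT t k)) /\
  (forall m, SC m -> SC (InS m k)) /\ (forall m, SC m -> SC (OutS m k)).
Proof.
  intros [Hw Hc]. split; [|split; [|split]].
  - intros t. split. constructor; auto. intros y Hy. inversion Hy; subst. apply (Hc y); auto.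
  - intros t. split. constructor; auto. intros y Hy. inversion Hy; subst. apply (Hc y); auto.
  - intros m [Hmw Hmc]. split. constructor; auto.
    intros y Hy. inversion Hy; subst; [apply (Hmc y)|apply (Hc y)]; auto.
  - intros m [Hmw Hmc]. split. constructor; auto.
    intros y Hy. inversion Hy; subst; [apply (Hmc y)|apply (Hc y)]; auto.
Qed.

Lemma SC_Ext_labels (ls : list (L * C)) : SC (Ext ls) -> NoDup (map fst ls) /\ ls <> [].
Proof. intros [Hw _]. inversion Hw; subst; auto. Qed.

Lemma SC_Int_labels (ls : list (L * C)) : SC (Int ls) -> NoDup (map fst ls) /\ ls <> [].
Proof. intros [Hw _]. inversion Hw; subst; auto. Qed.

Lemma SC_Int_single l (c : C) : SC c -> SC (Int [(l, c)]).
Proof.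
  intros [Hw Hc]. split.
  - constructor. congruence. simpl. constructor; auto. constructor.
    intros p [<-|[]]; auto.
  - intros y Hy. inversion Hy as [| | | | | | | | ls0 l0 c0 Hi Hoc |]; subst.
    destruct Hi as [E|[]]. inversion E; subst. apply (Hc y); auto.
Qed.

Lemma SC_Int_branch {ls : list (L * C)} {l c} : SC (Int ls) -> In (l, c) ls -> SC c.
Proof.
  intros Hs Hi.
  assert (H1 : SC (Int [(l, c)])).
  { destruct ls as [|p [|q ls']].
    - destruct Hi.
    - destruct Hi as [E|[]]; subst; auto.
    - apply (SC_lts (a := ATau) Hs). constructor; auto. simpl; lia. }
  apply (SC_lts (a := AOutL l) H1). constructor.
Qed.

Lemma SC_Ext_map (f : L * C -> C) (ls : list (L * C)) :
  ls <> [] -> NoDup (map fst ls) -> (forall p, In p ls -> SC (f p)) ->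
  SC (Ext (map (fun p => (fst p, f p)) ls)).
Proof.
  intros Hne Hnd Hf. split.
  - constructor.
    + destruct ls; simpl; congruence.
    + rewrite map_map. exact Hnd.
    + intros p Hp. apply in_map_iff in Hp as [q [<- Hq]]. apply Hf; auto.
  - intros y Hy. inversion Hy as [| | | | | | | ls0 l0 c0 Hi Hoc | |]; subst.
    apply in_map_iff in Hi as [q [E Hq]]. inversion E; subst.
    destruct (Hf q Hq) as [_ Hcl]. apply (Hcl y); auto.
Qed.

Lemma NoDup_fst_In {ls : list (L * C)} {l a b} :
  NoDup (map fst ls) -> In (l, a) ls -> In (l, b) ls -> a = b.
Proof.
  induction ls as [|[l0 c0] ls IH]; simpl; intros Hn Ha Hb; [contradiction|].
  inversion Hn as [|x xs Hnotin Hn']; subst. destruct Ha as [Ea|Ha]; destruct Hb as [Eb|Hb].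
  - inversion Ea; inversion Eb; subst; auto.
  - inversion Ea; subst. exfalso. apply Hnotin. apply in_map_iff. exists (l, b); auto.
  - inversion Eb; subst. exfalso. apply Hnotin. apply in_map_iff. exists (l, a); auto.
  - eauto.
Qed.

(** * Unfolding *)

Definition non_mu (s : C) : Prop := forall x k, s <> Mu x k.

Lemma mu_or_non_mu (s : C) : (exists x k, s = Mu x k) \/ non_mu s.
Proof. destruct s; try (right; intros ? ? ?; discriminate). left; eauto. Qed.

Fixpoint mu_depth (s : C) : nat := match s with Mu _ k => S (mu_depth k) | _ => 0 end.
Fixpoint mu_body (s : C) : C := match s with Mu _ k => mu_body k | _ => s end.

Lemma mu_body_var_unguarded (s : C) z : wf s -> mu_body s = Var z -> unguarded z s.
Proof.
  induction s; simpl; intros Hw E; try discriminate.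
  - inversion Hw; subst. assert (unguarded z s) by auto.
    destruct (Nat.eq_dec n z). subst; contradiction. constructor; auto.
  - inversion E; constructor.
Qed.

Lemma SC_mu_body (s : C) z : SC s -> mu_body s <> Var z.
Proof.
  intros [Hw Hc] E. apply (Hc z). apply unguarded_occurs_free. apply mu_body_var_unguarded; auto.
Qed.

Lemma mu_depth_subst (t : C) x k : (forall z, mu_body k <> Var z) ->
  mu_depth (subst k x t) = mu_depth k.
Proof.
  induction k; simpl; intro H; auto.
  - destruct (Nat.eqb_spec n x); simpl; auto.
  - exfalso; apply (H n); auto.
Qed.

(* Guardedness: the innermost body of a mu-prefix is not a variable, so unfolding the
   outer mu leaves the rest of the prefix intact and the mu-depth decreases. *)
Lemma unfolds_total (s : C) : SC s -> exists u, unfolds s u.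
Proof.
  remember (mu_depth s) as n eqn:E. revert s E.
  induction n; intros s E Hs.
  - exists s. constructor. intros x k ->. discriminate.
  - destruct s; try discriminate. simpl in E.
    assert (Hs' : SC (subst s n0 (Mu n0 s))) by (apply SC_subst_mu; auto).
    destruct (IHn (subst s n0 (Mu n0 s))) as [u Hu]; auto.
    + rewrite mu_depth_subst; [lia|]. intros z. exact (@SC_mu_body (Mu n0 s) z Hs).
    + exists u. constructor; auto.
Qed.

Lemma unfolds_non_mu (s u : C) : unfolds s u -> non_mu u.
Proof. intros H; induction H; auto. Qed.

Lemma unfolds_non_mu_id (s u : C) : non_mu s -> unfolds s u -> u = s.
Proof. intros Hs H; destruct H; auto. exfalso; eapply Hs; eauto. Qed.

Lemma SC_unfolds (s u : C) : unfolds s u -> SC s -> SC u.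
Proof. intros H; induction H; auto. intros Hs. apply IHunfolds. apply SC_subst_mu; auto. Qed.

Lemma lts_Mu_inv x k a (r' : C) : lts (Mu x k) a r' -> a = ATau /\ r' = subst k x (Mu x k).
Proof. intros H. inversion H; subst; auto. Qed.

Lemma lts_Int_single_inv l k a (r' : C) : lts (Int [(l, k)]) a r' -> a = AOutL l /\ r' = k.
Proof. intros H. inversion H; subst; auto. match goal with Hl : 1 < length _ |- _ => simpl in Hl; lia end. Qed.

Lemma lts_Ext_inv ls a (r' : C) : lts (Ext ls) a r' -> exists l, a = AInL l /\ In (l, r') ls.
Proof. intros H. inversion H; subst; eauto. Qed.

Lemma lts_Int_inv ls a (r' : C) : lts (Int ls) a r' ->
  (a = ATau /\ 1 < length ls /\ exists l k, In (l, k) ls /\ r' = Int [(l, k)]) \/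
  (exists l, ls = [(l, r')] /\ a = AOutL l).
Proof. intros H. inversion H; subst; eauto. left. eauto 10. Qed.

Lemma lts_tau_non_mu (u s' : C) : non_mu u -> lts u ATau s' ->
  exists ls l k, u = Int ls /\ 1 < length ls /\ In (l, k) ls /\ s' = Int [(l, k)].
Proof. intros Hu Hl. inversion Hl; subst; eauto 10. exfalso; eapply Hu; eauto. Qed.

(** * The dual contract *)

Fixpoint msubst (sg : list (nat * C)) (m : C) : C :=
  match sg with [] => m | (x, c) :: sg' => msubst sg' (subst m x c) end.

(* [dualE sg s] swaps inputs and outputs throughout [s]; [sg] records, for every
   enclosing [Mu x], the closed contract that [x] denotes in the original, so that
   message types are closed with the original (not the dualised) recursion. *)
Fixpoint dualE (sg : list (nat * C)) (s : C) : C :=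
  match s with
  | One => One
  | InT b k => OutT b (dualE sg k)
  | OutT b k => InT b (dualE sg k)
  | OutS m k => InS (msubst sg m) (dualE sg k)
  | InS m k => OutS (msubst sg m) (dualE sg k)
  | Ext ls => Int (map (fun p => (fst p, dualE sg (snd p))) ls)
  | Int ls => Ext (map (fun p => (fst p, dualE sg (snd p))) ls)
  | Mu x k => Mu x (dualE ((x, msubst sg (Mu x k)) :: sg) k)
  | Var x => Var x
  end.

Definition dual (s : C) : C := dualE [] s.

Definition closed_env (sg : list (nat * C)) : Prop := forall z c, In (z, c) sg -> closed c.

Lemma closed_env_cons x (c : C) sg : closed c -> closed_env sg -> closed_env ((x, c) :: sg).
Proof. intros Hc Hsg z c' [E|E]; [inversion E; subst; auto | exact (Hsg z c' E)]. Qed.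

Lemma msubst_closed_id sg (m : C) : closed m -> msubst sg m = m.
Proof.
  revert m; induction sg as [|[z c] sg IH]; simpl; intros m Hm; auto.
  rewrite subst_fresh; auto.
Qed.

Lemma occurs_free_msubst sg (m : C) y : closed_env sg -> occurs_free y (msubst sg m) ->
  occurs_free y m /\ ~ In y (map fst sg).
Proof.
  revert m; induction sg as [|[z c] sg IH]; simpl; intros m Hc Hf; auto.
  destruct (IH _ (fun z0 c0 H => Hc z0 c0 (or_intror H)) Hf) as [A Bn].
  apply occurs_free_subst in A as [A1 A2]; [|apply (Hc z c); left; reflexivity].
  split; auto. intros [E|E]; auto.
Qed.

Lemma msubst_closed sg (m : C) : closed_env sg ->
  (forall z, occurs_free z m -> In z (map fst sg)) -> closed (msubst sg m).
Proof. intros Hc Hd y Hy. apply occurs_free_msubst in Hy as [A Bn]; auto. Qed.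

Lemma msubst_wf sg (m : C) : (forall z c, In (z, c) sg -> closed c /\ wf c) ->
  wf m -> wf (msubst sg m).
Proof.
  revert m; induction sg as [|[z c] sg IH]; simpl; intros m Hc Hw; auto.
  apply IH. intros; eapply Hc; right; eauto.
  destruct (Hc z c); [left; reflexivity|]. apply wf_subst; auto.
Qed.

Ltac case_eqb :=
  repeat (match goal with |- context [Nat.eqb ?a ?b] => destruct (Nat.eqb_spec a b) end; simpl).

Lemma subst_comm (c v : C) x y m : closed c -> closed v -> x <> y ->
  subst (subst m x c) y v = subst (subst m y v) x c.
Proof.
  intros Hc Hv Hxy. induction m using contract_nested_ind; simpl; try congruence.
  - f_equal. rewrite !map_map. apply map_ext_in. intros [l k] Hp. simpl. f_equal. apply (H _ Hp).
  - f_equal. rewrite !map_map. apply map_ext_in. intros [l k] Hp. simpl. f_equal. apply (H _ Hp).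
  - case_eqb; subst; congruence.
  - case_eqb; subst; try congruence; rewrite subst_fresh; auto.
Qed.

Lemma subst_subst_same (v c : C) x m : closed v -> subst (subst m x v) x c = subst m x v.
Proof.
  intros Hv. apply subst_fresh. intro H. apply occurs_free_subst in H as [_ H]; auto.
Qed.

(* [dualE] only looks at the environment through [msubst] on subterms of [s]. *)
Lemma dualE_ext s : forall sg1 sg2 (V : nat -> Prop),
  (forall z, occurs_free z s -> V z) ->
  (forall m, (forall z, occurs_free z m -> V z) ->
     msubst sg1 m = msubst sg2 m /\ closed (msubst sg1 m)) ->
  dualE sg1 s = dualE sg2 s.
Proof.
  induction s using contract_nested_ind; intros sg1 sg2 V HV Hm; simpl; auto;
  try (f_equal; eapply IHs; eauto; intros; apply HV; constructor; auto; fail).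
  - f_equal. apply Hm. intros; apply HV; constructor; auto.
    eapply IHs2; eauto. intros; apply HV; apply of_outS_k; auto.
  - f_equal. apply Hm. intros; apply HV; constructor; auto.
    eapply IHs2; eauto. intros; apply HV; apply of_inS_k; auto.
  - f_equal. apply map_ext_in. intros [l k] Hp. simpl. f_equal. eapply (H _ Hp); eauto.
    intros z Hz; apply HV. econstructor; eauto.
  - f_equal. apply map_ext_in. intros [l k] Hp. simpl. f_equal. eapply (H _ Hp); eauto.
    intros z Hz; apply HV. econstructor; eauto.
  - destruct (Hm (Mu x s)) as [E Hcl]; auto. rewrite E. f_equal.
    apply IHs with (V := fun z => z = x \/ V z).
    + intros z Hz. destruct (Nat.eq_dec x z); auto. right. apply HV; constructor; auto.
    + intros m Hm'. simpl. rewrite <- E. apply Hm. intros z Hz.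
      apply occurs_free_subst in Hz as [A Bn]; auto. destruct (Hm' z A); auto. congruence.
Qed.

Lemma dualE_closed sg (c : C) : closed c -> dualE sg c = dual c.
Proof.
  intros Hc. apply dualE_ext with (V := fun _ => False).
  - intros z Hz; apply (Hc z Hz).
  - intros m Hm. assert (closed m) by (intros z Hz; apply (Hm z Hz)).
    rewrite !msubst_closed_id; auto.
Qed.

Lemma dualE_env_shadow (k : C) sg x v c : closed v -> closed c -> closed_env sg ->
  (forall z, occurs_free z k -> z = x \/ In z (map fst sg)) ->
  dualE ((x, v) :: (x, c) :: sg) k = dualE ((x, v) :: sg) k.
Proof.
  intros Hv Hc Hsg Hfv. apply dualE_ext with (V := fun z => z = x \/ In z (map fst sg)); auto.
  intros m Hm. simpl. rewrite subst_subst_same; auto. split; auto.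
  apply msubst_closed; auto. intros z Hz. apply occurs_free_subst in Hz as [A Bn]; auto.
  destruct (Hm z A); auto. congruence.
Qed.

Lemma dualE_env_swap (k : C) sg x y v c : x <> y -> closed v -> closed c -> closed_env sg ->
  (forall z, occurs_free z k -> z = x \/ z = y \/ In z (map fst sg)) ->
  dualE ((y, c) :: (x, v) :: sg) k = dualE ((x, v) :: (y, c) :: sg) k.
Proof.
  intros Hxy Hv Hc Hsg Hfv.
  apply dualE_ext with (V := fun z => z = x \/ z = y \/ In z (map fst sg)); auto.
  intros m Hm. simpl. rewrite subst_comm; auto. split; auto.
  apply msubst_closed; auto. intros z Hz.
  apply occurs_free_subst in Hz as [A Bn]; auto. apply occurs_free_subst in A as [A Bn']; auto.
  destruct (Hm z A) as [|[|]]; auto; congruence.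
Qed.

Lemma dualE_subst k : forall sg x (c : C), closed c -> closed_env sg ->
  (forall z, occurs_free z k -> z = x \/ In z (map fst sg)) ->
  dualE sg (subst k x c) = subst (dualE ((x, c) :: sg) k) x (dualE sg c).
Proof.
  induction k using contract_nested_ind; intros sg x0 c Hc Hsg Hfv; simpl; auto;
  try (f_equal; apply IHk; auto; intros z Hz; apply Hfv; constructor; auto; fail).
  - f_equal.
    + symmetry; apply subst_fresh. intro H. apply occurs_free_msubst in H as [H _]; auto.
      apply occurs_free_subst in H as [_ H]; auto.
    + apply IHk2; auto. intros z Hz; apply Hfv; apply of_outS_k; auto.
  - f_equal.
    + symmetry; apply subst_fresh. intro H. apply occurs_free_msubst in H as [H _]; auto.
      apply occurs_free_subst in H as [_ H]; auto.
    + apply IHk2; auto. intros z Hz; apply Hfv; apply of_inS_k; auto.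
  - f_equal. rewrite !map_map. apply map_ext_in. intros [l k] Hp. simpl. f_equal.
    apply (H _ Hp); auto. intros z Hz; apply Hfv; econstructor; eauto.
  - f_equal. rewrite !map_map. apply map_ext_in. intros [l k] Hp. simpl. f_equal.
    apply (H _ Hp); auto. intros z Hz; apply Hfv; econstructor; eauto.
  - destruct (Nat.eqb_spec x x0).
    + subst x0. simpl; case_eqb; try congruence. f_equal. symmetry. apply dualE_env_shadow; auto.
      * apply msubst_closed; auto. intros z Hz. inversion Hz; subst.
        destruct (Hfv z Hz); auto. congruence.
      * intros z Hz. destruct (Nat.eq_dec z x); auto. apply Hfv. constructor; auto.
    + simpl. case_eqb; try congruence.
      set (v := msubst sg (Mu x (subst k x0 c))).
      assert (Hv : closed v).
      { apply msubst_closed; auto. intros z Hz. inversion Hz; subst.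
        match goal with H : occurs_free z (subst _ _ _) |- _ =>
          apply occurs_free_subst in H as [A Bn]; auto end.
        destruct (Hfv z); auto. constructor; auto. congruence. }
      f_equal. rewrite IHk; auto using closed_env_cons.
      * rewrite (dualE_closed ((x, v) :: sg) Hc), (dualE_closed sg Hc). f_equal. apply dualE_env_swap; auto.
        intros z Hz. destruct (Nat.eq_dec z x); auto. destruct (Hfv z); auto. constructor; auto.
      * intros z Hz. destruct (Nat.eq_dec z x); subst; simpl; auto.
        destruct (Hfv z); auto. constructor; auto.
  - case_eqb; auto.
Qed.

Lemma dualE_unguarded k : forall sg y, unguarded y (dualE sg k) -> unguarded y k.
Proof.
  induction k; simpl; intros sg y H; try (inversion H; fail).
  - inversion H; subst. constructor; eauto.
  - auto.
Qed.

Lemma dualE_wf s : forall sg, (forall z c, In (z, c) sg -> closed c /\ wf c) -> wf s ->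
  (forall z, occurs_free z s -> In z (map fst sg)) -> wf (dualE sg s).
Proof.
  intros sg Hsg Hw. revert sg Hsg. induction Hw; intros sg Hsg Hfv; simpl;
  try (constructor; auto; fail).
  - constructor; apply IHHw; auto. intros; apply Hfv; constructor; auto.
  - constructor; apply IHHw; auto. intros; apply Hfv; constructor; auto.
  - constructor. apply msubst_wf; auto. apply IHHw2; auto. intros; apply Hfv; apply of_outS_k; auto.
  - constructor. apply msubst_wf; auto. apply IHHw2; auto. intros; apply Hfv; apply of_inS_k; auto.
  - apply (wf_Int_map (dualE sg)); auto. intros [l c] Hq. apply (H2 _ Hq); auto.
    intros z Hz; apply Hfv. econstructor; eauto.
  - apply (wf_Ext_map (dualE sg)); auto. intros [l c] Hq. apply (H2 _ Hq); auto.
    intros z Hz; apply Hfv. econstructor; eauto.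
  - constructor.
    + intro Hu. apply H. eapply dualE_unguarded; eauto.
    + apply IHHw.
      * intros z c [E|E]; [|eapply Hsg; eauto]. inversion E; subst. split.
        -- apply msubst_closed. intros z0 c0 Hi; apply (Hsg z0 c0 Hi). auto.
        -- apply msubst_wf; auto. constructor; auto.
      * intros z Hz. destruct (Nat.eq_dec x z). left; auto. right. apply Hfv. constructor; auto.
Qed.

Lemma occurs_free_dualE s : forall sg y, closed_env sg ->
  (forall z, occurs_free z s -> In z (map fst sg)) ->
  occurs_free y (dualE sg s) -> occurs_free y s.
Proof.
  induction s using contract_nested_ind; simpl; intros sg y Hsg Hfv Hy;
  inversion Hy; subst;
  try (constructor; eapply IHs; eauto; intros; apply Hfv; constructor; auto; fail).
  - exfalso. match goal with H : occurs_free y (msubst _ _) |- _ =>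
      refine (msubst_closed Hsg _ H) end. intros; apply Hfv; constructor; auto.
  - apply of_outS_k. eapply IHs2; eauto. intros; apply Hfv; apply of_outS_k; auto.
  - exfalso. match goal with H : occurs_free y (msubst _ _) |- _ =>
      refine (msubst_closed Hsg _ H) end. intros; apply Hfv; constructor; auto.
  - apply of_inS_k. eapply IHs2; eauto. intros; apply Hfv; apply of_inS_k; auto.
  - match goal with Hi : In _ (map _ _) |- _ => apply in_map_iff in Hi as [[l' c'] [E Hq]] end.
    simpl in E. inversion E; subst.
    econstructor; eauto. eapply (H _ Hq); eauto. intros; apply Hfv; econstructor; eauto.
  - match goal with Hi : In _ (map _ _) |- _ => apply in_map_iff in Hi as [[l' c'] [E Hq]] end.
    simpl in E. inversion E; subst.
    econstructor; eauto. eapply (H _ Hq); eauto. intros; apply Hfv; econstructor; eauto.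
  - constructor; auto. apply IHs with (sg := (x, msubst sg (Mu x s)) :: sg); auto.
    + apply closed_env_cons; auto. apply msubst_closed; auto.
    + intros z Hz. destruct (Nat.eq_dec x z). left; auto. right. apply Hfv. constructor; auto.
Qed.

Lemma SC_dual s : SC s -> SC (dual s).
Proof.
  intros [Hw Hc]. split.
  - apply dualE_wf; [intros z c [] | exact Hw | intros z Hz; exfalso; exact (Hc z Hz)].
  - intros y Hy. apply (Hc y).
    apply (@occurs_free_dualE s [] y); [intros z c [] | intros z Hz; exfalso; exact (Hc z Hz) | exact Hy].
Qed.

Lemma dual_subst_mu x k : closed (Mu x k) ->
  subst (dualE [(x, Mu x k)] k) x (Mu x (dualE [(x, Mu x k)] k)) = dual (subst k x (Mu x k)).
Proof.
  intros Hc. unfold dual. rewrite dualE_subst; auto.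
  - intros z c [].
  - intros z Hz. destruct (Nat.eq_dec z x); auto. exfalso. apply (Hc z). constructor; auto.
Qed.

Lemma dual_non_mu s : non_mu s -> non_mu (dual s).
Proof. intros H x k. destruct s; simpl; try discriminate. exfalso; eapply H; eauto. Qed.

Lemma unfolds_dual s u : unfolds s u -> SC s -> unfolds (dual s) (dual u).
Proof.
  intros H; induction H; intros Hs.
  - unfold dual at 1. simpl. constructor. rewrite dual_subst_mu by apply Hs.
    apply IHunfolds. apply SC_subst_mu; auto.
  - constructor. apply dual_non_mu; auto.
Qed.

(** * Compliance *)

Section Compliance.
Context (B : C -> C -> Prop).
Notation comp := (complies leb B).
Notation pt := (par_tau leb B).

Lemma complies_SC r s : comp r s -> SC r /\ SC s.
Proof. intros [R [HR [_ Hr]]]; auto. Qed.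

Lemma complies_step r s r' s' : comp r s -> pt r s r' s' -> comp r' s'.
Proof.
  intros [R [HR [Hsim Hr]]] Hp. exists R; split; [|split]; auto.
  exact (proj2 (Hsim _ _ Hr) _ _ Hp).
Qed.

Lemma complies_stuck r s : comp r s -> ~ (exists r' s', pt r s r' s') ->
  (exists r', lts r ACheck r') /\ (exists s', lts s ACheck s').
Proof. intros [R [_ [Hsim Hr]]] Hn. exact (proj1 (Hsim _ _ Hr) Hn). Qed.

Lemma complies_coind (R : C -> C -> Prop) :
  (forall a b, R a b -> SC a /\ SC b) ->
  (forall a b, R a b ->
     ((~ exists a' b', pt a b a' b') ->
        (exists a', lts a ACheck a') /\ (exists b', lts b ACheck b')) /\
     (forall a' b', pt a b a' b' -> R a' b' \/ comp a' b')) ->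
  forall r s, R r s -> comp r s.
Proof.
  intros HSC Hsim r s Hr. exists (fun a b => R a b \/ comp a b). split; [|split].
  - intros a b [H|H]; [apply HSC | apply complies_SC]; auto.
  - intros a b [H|H]; split.
    + apply (Hsim _ _ H).
    + apply (Hsim _ _ H).
    + apply complies_stuck; auto.
    + intros a' b' Hp. right. eapply complies_step; eauto.
  - left; auto.
Qed.

Lemma complies_intro r s : SC r -> SC s ->
  ((~ exists r' s', pt r s r' s') ->
     (exists r', lts r ACheck r') /\ (exists s', lts s ACheck s')) ->
  (forall r' s', pt r s r' s' -> comp r' s') -> comp r s.
Proof.
  intros Hr Hs Hstuck Hmoves.
  apply (complies_coind (fun a b => a = r /\ b = s)); auto.
  - intros a b [-> ->]; auto.
  - intros a b [-> ->]. split; auto.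
Qed.

Lemma complies_mu r x k : SC r -> SC (Mu x k) ->
  comp r (subst k x (Mu x k)) -> comp r (Mu x k).
Proof.
  intros Hr Hs Hc.
  apply (complies_coind (fun a b => b = Mu x k /\ SC a /\ comp a (subst k x (Mu x k)))).
  - intros a b [-> [Ha _]]; auto.
  - intros a b [-> [Ha Hca]]. split.
    + intros Hn. exfalso. apply Hn. exists a, (subst k x (Mu x k)). apply pt_right. constructor.
    + intros a' b' Hp. inversion Hp as [? ? ? Hl|? ? ? Hl|? ? ? ? a1 a2 Hl1 Hl2 Hb]; subst.
      * left. assert (comp a' (subst k x (Mu x k))) by (eapply complies_step; eauto; apply pt_left; auto).
        split; auto. split; auto. apply (complies_SC H).
      * right. inversion Hl; subst. auto.
      * inversion Hl2; subst. destruct a1; simpl in Hb; contradiction.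
  - auto.
Qed.

Lemma complies_unfolds r s u : comp r s -> unfolds s u -> comp r u.
Proof.
  intros Hc Hu; induction Hu; auto. apply IHHu.
  eapply complies_step; eauto. apply pt_right. constructor.
Qed.

Lemma complies_unfolds_inv r s u : SC r -> SC s -> unfolds s u -> comp r u -> comp r s.
Proof.
  intros Hr Hs Hu; induction Hu; intros Hc; auto.
  apply complies_mu; auto. apply IHHu; auto. apply SC_subst_mu; auto.
Qed.

Lemma complies_some_move r s : comp r s -> (forall r', ~ lts r ACheck r') ->
  exists r' s', pt r s r' s'.
Proof.
  intros Hc Hn. destruct (classic (exists r' s', pt r s r' s')) as [H|H]; auto.
  destruct (complies_stuck Hc H) as [[r' Hr] _]. exfalso; eapply Hn; eauto.
Qed.

Lemma lts_bowtie_det ta (u : C) a a' k k' : SC u ->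
  lts u a k -> lts u a' k' -> bowtie leb B ta a -> bowtie leb B ta a' -> k = k'.
Proof.
  intros Hu H1 H2 Hb1 Hb2. destruct H1.
  - destruct ta; contradiction.
  - inversion H2; subst; auto.
  - inversion H2; subst; auto.
  - inversion H2; subst; auto.
  - inversion H2; subst; auto.
  - apply lts_Int_single_inv in H2 as [_ ->]; auto.
  - destruct ta; contradiction.
  - apply lts_Ext_inv in H2 as [l' [-> Hi']].
    destruct ta; simpl in Hb1, Hb2; try contradiction. subst.
    exact (NoDup_fst_In (proj1 (SC_Ext_labels Hu)) H Hi').
  - destruct ta; contradiction.
Qed.

Lemma complies_sole_sync r u a1 a2 r' u' : SC r -> SC u ->
  lts r a1 r' -> lts u a2 u' -> bowtie leb B a1 a2 ->
  (forall r'' u'', pt r u r'' u'' -> r'' = r' /\ u'' = u') -> comp r' u' -> comp r u.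
Proof.
  intros Hr Hu H1 H2 Hb Huniq Hc. apply complies_intro; auto.
  - intros Hn; exfalso; apply Hn. exists r', u'. eapply pt_sync; eauto.
  - intros r'' u'' Hp. destruct (Huniq _ _ Hp); subst; auto.
Qed.

(* A client that cannot answer an internal choice makes the server's internal
   choice fatal, so a compliant server cannot have one. *)
Lemma complies_no_tau r u : comp r u -> non_mu u ->
  (forall r', ~ lts r ATau r') -> (forall a r' l, lts r a r' -> ~ bowtie leb B a (AOutL l)) ->
  forall u', ~ lts u ATau u'.
Proof.
  intros Hc Hu Hrt Hrl u' Hl.
  destruct (lts_tau_non_mu Hu Hl) as [ls [l [k [_ [_ [_ ->]]]]]].
  assert (Hc' : comp r (Int [(l, k)])) by (eapply complies_step; [exact Hc | apply pt_right; exact Hl]).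
  destruct (classic (exists r' s', pt r (Int [(l, k)]) r' s')) as [[r' [s' Hp]]|Hn].
  - inversion Hp; subst.
    + eapply Hrt; eauto.
    + apply lts_Int_single_inv in H as [E _]; discriminate.
    + apply lts_Int_single_inv in H0 as [-> _]. eapply Hrl; eauto.
  - destruct (complies_stuck Hc' Hn) as [_ [s' Hs']].
    apply lts_Int_single_inv in Hs' as [E _]; discriminate.
Qed.

Lemma complies_sync r u : comp r u -> non_mu u ->
  (forall r', ~ lts r ATau r') -> (forall r', ~ lts r ACheck r') ->
  (forall a r' l, lts r a r' -> ~ bowtie leb B a (AOutL l)) ->
  exists a1 a2 r' u', lts r a1 r' /\ lts u a2 u' /\ bowtie leb B a1 a2 /\ comp r' u'.
Proof.
  intros Hc Hu Hrt Hck Hrl.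
  destruct (complies_some_move Hc Hck) as [r' [u' Hp]].
  inversion Hp; subst.
  - exfalso; eapply Hrt; eauto.
  - exfalso; eapply complies_no_tau; eauto.
  - exists a1, a2, r', u'. repeat split; auto. eapply complies_step; eauto.
Qed.

Lemma complies_One : comp One One.
Proof.
  apply complies_intro; try exact SC_One.
  - intros _; split; exists One; constructor.
  - intros r' s' Hp. exfalso. inversion Hp as [? ? ? Hl|? ? ? Hl|? ? ? ? a1 a2 Hl1 Hl2 Hb]; subst.
    + inversion Hl.
    + inversion Hl.
    + inversion Hl1; subst. inversion Hl2; subst. contradiction.
Qed.

Lemma complies_One_inv u : comp One u -> non_mu u -> u = One.
Proof.
  intros Hc Hu.
  assert (Hnt : forall u', ~ lts u ATau u').
  { apply (complies_no_tau Hc Hu).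
    - intros r' H; inversion H.
    - intros a r' l H; inversion H; subst; simpl; auto. }
  destruct (classic (exists r' u', pt One u r' u')) as [[r' [u' Hp]]|Hn].
  - exfalso. inversion Hp; subst.
    + inversion H.
    + eapply Hnt; eauto.
    + inversion H; subst; simpl in H1; contradiction.
  - destruct (complies_stuck Hc Hn) as [_ [u' Hu']]. inversion Hu'; subst; auto.
Qed.

Lemma complies_Ext_Int (lr ls : list (L * C)) : SC (Ext lr) -> SC (Int ls) ->
  (forall l c, In (l, c) ls -> exists r, In (l, r) lr) ->
  (forall l r c, In (l, r) lr -> In (l, c) ls -> comp r c) ->
  comp (Ext lr) (Int ls).
Proof.
  intros Hr Hs Hcover Hbr.
  destruct (SC_Ext_labels Hr) as [Hndr _]. destruct (SC_Int_labels Hs) as [_ Hne].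
  assert (Hcommit : forall l c, In (l, c) ls -> comp (Ext lr) (Int [(l, c)])).
  { intros l c Hi. destruct (Hcover l c Hi) as [r Hir].
    apply (complies_sole_sync (a1 := AInL l) (a2 := AOutL l) (r' := r) (u' := c)).
    - exact Hr.
    - apply SC_Int_single. exact (SC_Int_branch Hs Hi).
    - constructor; auto.
    - constructor.
    - reflexivity.
    - intros r'' u'' Hp. inversion Hp; subst.
      + apply lts_Ext_inv in H as [l0 [E _]]; discriminate.
      + apply lts_Int_single_inv in H as [E _]; discriminate.
      + apply lts_Ext_inv in H as [l0 [-> Hi0]]. apply lts_Int_single_inv in H0 as [-> ->].
        simpl in H1; subst l0. split; auto. exact (NoDup_fst_In Hndr Hi0 Hir).
    - exact (Hbr l r c Hir Hi). }
  apply complies_intro; auto.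
  - intros Hn; exfalso; apply Hn. destruct ls as [|[l k] [|q ls']]; [congruence| |].
    + destruct (Hcover l k (or_introl eq_refl)) as [r Hir].
      exists r, k. eapply pt_sync; [apply lts_ext; exact Hir | apply lts_outL | simpl; auto].
    + exists (Ext lr), (Int [(l, k)]). apply pt_right. constructor. simpl; lia. left; auto.
  - intros r' s' Hp. inversion Hp; subst.
    + apply lts_Ext_inv in H as [l0 [E _]]; discriminate.
    + apply lts_Int_inv in H as [[_ [_ [l0 [k [Hi ->]]]]]|[l0 [_ E]]]; [|discriminate].
      apply Hcommit; auto.
    + apply lts_Ext_inv in H as [l0 [-> Hi0]].
      apply lts_Int_inv in H0 as [[-> _]|[l' [E ->]]]; [simpl in H1; contradiction|].
      simpl in H1; subst l0. apply (Hbr l'); auto. rewrite E; left; auto.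
Qed.

Lemma complies_Ext_inv (lr : list (L * C)) u : comp (Ext lr) u -> non_mu u ->
  exists ls, u = Int ls /\ forall l c, In (l, c) ls -> exists r, In (l, r) lr /\ comp r c.
Proof.
  intros Hc Hu.
  assert (Hck : forall r', ~ lts (Ext lr) ACheck r').
  { intros r' H. apply lts_Ext_inv in H as [l [E _]]; discriminate. }
  assert (Hint : exists ls, u = Int ls).
  { destruct (complies_some_move Hc Hck) as [r' [s' Hp]]. inversion Hp; subst.
    - apply lts_Ext_inv in H as [l [E _]]; discriminate.
    - destruct (lts_tau_non_mu Hu H) as [ls [_ [_ [-> _]]]]; eauto.
    - apply lts_Ext_inv in H as [l [-> _]]. destruct a2; simpl in H1; try contradiction.
      inversion H0; subst; eauto. }
  destruct Hint as [ls ->]. exists ls. split; auto.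
  intros l c Hi.
  assert (Hc1 : comp (Ext lr) (Int [(l, c)])).
  { destruct ls as [|p [|q ls']].
    - destruct Hi.
    - destruct Hi as [<-|[]]; auto.
    - eapply complies_step; eauto. apply pt_right. constructor; auto. simpl; lia. }
  destruct (complies_some_move Hc1 Hck) as [r' [s' Hp]]. inversion Hp; subst.
  - apply lts_Ext_inv in H as [l0 [E _]]; discriminate.
  - apply lts_Int_single_inv in H as [E _]; discriminate.
  - apply lts_Ext_inv in H as [l0 [-> Hi0]]. apply lts_Int_single_inv in H0 as [-> ->].
    simpl in H1; subst. exists r'. split; auto. eapply complies_step; eauto.
Qed.

(** * Compliance of the dual *)

Section Reflexive.
Hypothesis leb_refl : forall t, leb t t.
Hypothesis B_refl : forall a : C, SC a -> B a a.

Definition dual_branches (ls : list (L * C)) : list (L * C) :=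
  map (fun p => (fst p, dual (snd p))) ls.

Lemma In_dual_branches_inv ls l d : In (l, d) (dual_branches ls) ->
  exists k, In (l, k) ls /\ d = dual k.
Proof.
  intros H. apply in_map_iff in H as [[l' k] [E Hi]]. simpl in E. inversion E; subst. eauto.
Qed.

Lemma In_dual_branches ls l k : In (l, k) ls -> In (l, dual k) (dual_branches ls).
Proof. intros H. apply in_map_iff. exists (l, k); auto. Qed.

(* [v] plays the dual of [u], where either side may already have committed to a
   branch of its internal choice. *)
Definition dual_state (v u : C) : Prop :=
  v = dual u \/
  (exists ls l k, u = Ext ls /\ In (l, k) ls /\ v = Int [(l, dual k)]) \/
  (exists ls l k, u = Int [(l, k)] /\ In (l, k) ls /\ NoDup (map fst ls) /\
                  v = Ext (dual_branches ls)).

Definition dual_rel (r s : C) : Prop :=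
  SC r /\ SC s /\ exists u v, unfolds s u /\ unfolds r v /\ dual_state v u.

Lemma dual_rel_dual k : SC k -> dual_rel (dual k) k.
Proof.
  intros Hk. destruct (unfolds_total Hk) as [u Hu].
  split; [apply SC_dual; auto|]. split; auto. exists u, (dual u). repeat split; auto.
  apply unfolds_dual; auto. left; auto.
Qed.

Lemma dual_state_tau_left r v u r' : unfolds r v -> dual_state v u -> non_mu u ->
  lts r ATau r' -> exists v', unfolds r' v' /\ dual_state v' u.
Proof.
  intros Hv HQ Hu Hl. destruct (mu_or_non_mu r) as [[x [k ->]]|Hr].
  - apply lts_Mu_inv in Hl as [_ ->]. inversion Hv; subst; eauto.
    exfalso; eapply H; eauto.
  - apply unfolds_non_mu_id in Hv; auto. subst v.
    destruct HQ as [E|[[ls [l [k [E1 [E2 E3]]]]]|[ls [l [k [E1 [E2 [E3 E4]]]]]]]]; subst.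
    + destruct u as [| | | | |ls0|ls0| |]; simpl in Hl; try (inversion Hl; fail).
      * apply lts_Int_inv in Hl as [[_ [Hlen [l [d [Hi E]]]]]|[l [_ E]]]; [|discriminate].
        apply In_dual_branches_inv in Hi as [k [Hi ->]]. exists r'. split.
        -- subst. constructor. intros ? ? ?; discriminate.
        -- right; left. exists ls0, l, k. subst; auto.
      * exfalso; eapply Hu; eauto.
    + apply lts_Int_single_inv in Hl as [E _]. discriminate.
    + apply lts_Ext_inv in Hl as [l0 [E _]]. discriminate.
Qed.

Lemma dual_state_tau_right v u s' : SC u -> non_mu u -> dual_state v u ->
  lts u ATau s' -> exists u', unfolds s' u' /\ dual_state v u'.
Proof.
  intros Hs Hu HQ Hl.
  destruct (lts_tau_non_mu Hu Hl) as [ls0 [l0 [k [-> [Hlen [Hi ->]]]]]].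
  exists (Int [(l0, k)]). split. { constructor; intros ? ? ?; discriminate. }
  destruct HQ as [E|[[ls [l [k' [E1 [E2 E3]]]]]|[ls [l [k' [E1 [E2 [E3 E4]]]]]]]].
  - right; right. exists ls0, l0, k. repeat split; auto. apply SC_Int_labels; auto.
  - discriminate.
  - inversion E1; subst. simpl in Hlen. lia.
Qed.

Lemma dual_state_sync v u r' s' a1 a2 : SC u -> non_mu u -> dual_state v u ->
  lts v a1 r' -> lts u a2 s' -> bowtie leb B a1 a2 -> r' = dual s'.
Proof.
  intros Hs Hu HQ H1 H2 Hb.
  destruct HQ as [E|[[ls [l [k [E1 [E2 E3]]]]]|[ls [l [k [E1 [E2 [E3 E4]]]]]]]]; subst.
  - destruct u as [| | | | |ls0|ls0| |]; simpl in H1.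
    + inversion H1; subst; simpl in Hb; contradiction.
    + inversion H1; subst. inversion H2; subst. auto.
    + inversion H1; subst. inversion H2; subst. auto.
    + inversion H1; subst. inversion H2; subst. auto.
    + inversion H1; subst. inversion H2; subst. auto.
    + apply lts_Int_inv in H1 as [[-> _]|[l [E ->]]].
      * destruct a2; simpl in Hb; contradiction.
      * apply lts_Ext_inv in H2 as [l' [-> Hi]]. simpl in Hb. subst l'.
        destruct ls0 as [|[l1 k1] [|p ls']]; simpl in E; try discriminate.
        inversion E; subst. destruct Hi as [Hi|[]]. inversion Hi; subst; auto.
    + apply lts_Ext_inv in H1 as [l [-> Hi]]. apply In_dual_branches_inv in Hi as [k [Hi ->]].
      apply lts_Int_inv in H2 as [[-> _]|[l' [E ->]]].
      * simpl in Hb; contradiction.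
      * simpl in Hb. subst. destruct Hi as [Hi|[]]. inversion Hi; subst; auto.
    + exfalso; eapply Hu; eauto.
    + inversion H1.
  - apply lts_Int_single_inv in H1 as [-> ->]. apply lts_Ext_inv in H2 as [l' [-> Hi]].
    simpl in Hb; subst l'. f_equal. exact (NoDup_fst_In (proj1 (SC_Ext_labels Hs)) E2 Hi).
  - apply lts_Ext_inv in H1 as [l' [-> Hi]]. apply In_dual_branches_inv in Hi as [k' [Hi ->]].
    apply lts_Int_single_inv in H2 as [-> ->]. simpl in Hb; subst l'. f_equal.
    exact (NoDup_fst_In E3 Hi E2).
Qed.

Lemma dual_rel_step r s r' s' : dual_rel r s -> pt r s r' s' -> dual_rel r' s'.
Proof.
  intros [Hr [Hs [u [v [Hu [Hv HQ]]]]]] Hp.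
  assert (HuSC : SC u) by (eapply SC_unfolds; eauto).
  assert (Hum : non_mu u) by (eapply unfolds_non_mu; eauto).
  inversion Hp as [? ? ? Hl|? ? ? Hl|? ? ? ? a1 a2 Hl1 Hl2 Hb]; subst.
  - destruct (dual_state_tau_left Hv HQ Hum Hl) as [v' [Hv' HQ']].
    split; [exact (SC_lts Hr Hl)|]. split; eauto.
  - split; auto. split; [exact (SC_lts Hs Hl)|].
    destruct (mu_or_non_mu s) as [[x [k ->]]|Hsm].
    + apply lts_Mu_inv in Hl as [_ ->]. inversion Hu; subst.
      * exists u, v; auto.
      * exfalso; eapply H; eauto.
    + apply unfolds_non_mu_id in Hu; auto. subst u.
      destruct (dual_state_tau_right HuSC Hum HQ Hl) as [u' [Hu' HQ']]. eauto.
  - destruct (mu_or_non_mu r) as [[x [k ->]]|Hrm].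
    + apply lts_Mu_inv in Hl1 as [-> _]. simpl in Hb; contradiction.
    + destruct (mu_or_non_mu s) as [[x [k ->]]|Hsm].
      * apply lts_Mu_inv in Hl2 as [-> _]. destruct a1; simpl in Hb; contradiction.
      * apply unfolds_non_mu_id in Hu; auto. apply unfolds_non_mu_id in Hv; auto. subst u v.
        rewrite (dual_state_sync HuSC Hum HQ Hl1 Hl2 Hb). apply dual_rel_dual. exact (SC_lts Hs Hl2).
Qed.

(* Every stuck dual pair has reached [One || One]: any other shape offers a move. *)
Lemma dual_rel_stuck r s : dual_rel r s -> ~ (exists r' s', pt r s r' s') ->
  (exists r', lts r ACheck r') /\ (exists s', lts s ACheck s').
Proof.
  intros [Hr [Hs [u [v [Hu [Hv HQ]]]]]] Hn.
  destruct (mu_or_non_mu r) as [[x [k ->]]|Hrm].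
  { exfalso; apply Hn. eexists; exists s. apply pt_left. constructor. }
  destruct (mu_or_non_mu s) as [[x [k ->]]|Hsm].
  { exfalso; apply Hn. exists r; eexists. apply pt_right. constructor. }
  apply unfolds_non_mu_id in Hu; auto. apply unfolds_non_mu_id in Hv; auto. subst u v.
  destruct HQ as [E|[[ls [l [k [E1 [E2 E3]]]]]|[ls [l [k [E1 [E2 [E3 E4]]]]]]]]; subst.
  - destruct s as [| | | | |ls0|ls0| |]; simpl; [split; exists One; constructor|exfalso..].
    + apply Hn. do 2 eexists. eapply pt_sync; try constructor. simpl; apply leb_refl.
    + apply Hn. do 2 eexists. eapply pt_sync; try constructor. simpl; apply leb_refl.
    + apply Hn. do 2 eexists. eapply pt_sync; try constructor. simpl.
      apply B_refl. eapply SC_OutS_msg; eauto.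
    + apply Hn. do 2 eexists. eapply pt_sync; try constructor. simpl.
      apply B_refl. eapply SC_InS_msg; eauto.
    + apply Hn. destruct (SC_Ext_labels Hs) as [_ Hne].
      destruct ls0 as [|[l1 k1] [|p ls']]; [congruence| |].
      * do 2 eexists. eapply pt_sync. apply lts_outL. apply lts_ext. left; reflexivity. simpl; auto.
      * do 2 eexists. apply pt_left. eapply lts_int_tau. simpl; lia. left; reflexivity.
    + apply Hn. destruct (SC_Int_labels Hs) as [_ Hne].
      destruct ls0 as [|[l1 k1] [|p ls']]; [congruence| |].
      * do 2 eexists. eapply pt_sync. apply lts_ext. left; reflexivity. apply lts_outL. simpl; auto.
      * do 2 eexists. apply pt_right. eapply lts_int_tau. simpl; lia. left; reflexivity.
    + eapply Hsm; eauto.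
    + destruct Hs as [_ Hc]. apply (Hc n). constructor.
  - exfalso; apply Hn. do 2 eexists. eapply pt_sync. apply lts_outL. apply lts_ext. eauto. simpl; auto.
  - exfalso; apply Hn. do 2 eexists. eapply pt_sync. apply lts_ext. apply In_dual_branches; eauto.
    apply lts_outL. simpl; auto.
Qed.

Lemma dual_complies k : SC k -> comp (dual k) k.
Proof.
  intros Hk. exists dual_rel. split; [|split].
  - intros a b [Ha [Hb _]]; auto.
  - intros a b Hab. split.
    + apply dual_rel_stuck; auto.
    + intros a' b' Hp. eapply dual_rel_step; eauto.
  - apply dual_rel_dual; auto.
Qed.

(** * Testing the subcontract relation *)

Definition subcontract_rel (a b : C) : Prop := SC a /\ SC b /\ subcontract leb B a b.

(* Testing [u1] with clients [T rho] that perform the single action [ta] and then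
   behave as [rho]: since the dual of [k1] is such a [rho], [u2] must answer [ta],
   and its continuation inherits every client of [k1]. *)
Lemma subcontract_sole_test (T : C -> C) ta (u1 u2 k1 : C) a1 :
  SC u1 -> SC u2 -> non_mu u2 -> subcontract leb B u1 u2 ->
  (forall rho, SC rho ->
     SC (T rho) /\ lts (T rho) ta rho /\ forall b r, lts (T rho) b r -> b = ta /\ r = rho) ->
  (forall l, ~ bowtie leb B ta (AOutL l)) ->
  lts u1 a1 k1 -> bowtie leb B ta a1 ->
  (forall k, ~ lts u1 ATau k) -> (forall b k, lts u1 b k -> bowtie leb B ta b -> k = k1) ->
  exists a2 k2, lts u2 a2 k2 /\ bowtie leb B ta a2 /\ subcontract_rel k1 k2.
Proof.
  intros Hu1 Hu2 Hu2m Hsub HT Hnl Hl1 Hb Hnt Hdet.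
  assert (Hta : ta <> ATau /\ ta <> ACheck) by (split; intros ->; destruct a1; contradiction).
  assert (response : forall rho, SC rho -> comp rho k1 ->
            exists a2 k2, lts u2 a2 k2 /\ bowtie leb B ta a2 /\ comp rho k2).
  { intros rho Hrho Hc. destruct (HT rho Hrho) as [HTs [HTl HTu]].
    assert (Hc1 : comp (T rho) u1).
    { apply (complies_sole_sync HTs Hu1 HTl Hl1 Hb); auto.
      intros r'' u'' Hp. inversion Hp as [? ? ? Hl|? ? ? Hl|? ? ? ? b1 b2 Hlb1 Hlb2 Hbb]; subst.
      - destruct (HTu _ _ Hl) as [E _]. destruct Hta. congruence.
      - exfalso; eapply Hnt; eauto.
      - destruct (HTu _ _ Hlb1) as [-> ->]. split; auto. eapply Hdet; eauto. }
    apply Hsub in Hc1; auto.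
    destruct (complies_sync Hc1 Hu2m) as [b1 [a2 [r' [k2 [Hlb1 [Hl2 [Hb2 Hc2]]]]]]].
    - intros r' Hl. destruct (HTu _ _ Hl). destruct Hta. congruence.
    - intros r' Hl. destruct (HTu _ _ Hl). destruct Hta. congruence.
    - intros b r' l Hl. destruct (HTu _ _ Hl) as [-> _]. apply Hnl.
    - destruct (HTu _ _ Hlb1) as [-> ->]. eauto. }
  destruct (response (dual k1)) as [a2 [k2 [Hl2 [Hb2 _]]]].
  { apply SC_dual. exact (SC_lts Hu1 Hl1). }
  { apply dual_complies. exact (SC_lts Hu1 Hl1). }
  exists a2, k2. split; [exact Hl2|]. split; [exact Hb2|].
  split; [exact (SC_lts Hu1 Hl1)|]. split; [exact (SC_lts Hu2 Hl2)|].
  intros rho Hrho Hc. destruct (response rho Hrho Hc) as [a3 [k3 [Hl3 [Hb3 Hc3]]]].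
  rewrite (lts_bowtie_det ta Hu2 Hl2 Hl3 Hb2 Hb3). exact Hc3.
Qed.

Lemma subcontract_InT t1 k1 u2 : SC (InT t1 k1) -> SC u2 -> non_mu u2 ->
  subcontract leb B (InT t1 k1) u2 ->
  exists t2 k2, u2 = InT t2 k2 /\ subcontract_rel k1 k2 /\ leb t1 t2.
Proof.
  intros Hu1 Hu2 Hu2m Hsub.
  destruct (subcontract_sole_test (OutT t1) (ta := AOutT t1) (a1 := AInT t1) (k1 := k1)
              Hu1 Hu2 Hu2m Hsub) as [a2 [k2 [Hl [Hb Hr]]]].
  - intros rho Hrho. split; [apply SC_prefixes; auto|].
    split; [constructor | intros b r H; inversion H; auto].
  - intros l; simpl; auto.
  - constructor.
  - apply leb_refl.
  - intros k H; inversion H.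
  - intros b k H _; inversion H; auto.
  - destruct a2; simpl in Hb; try contradiction. inversion Hl; subst. eauto.
Qed.

Lemma subcontract_OutT t1 k1 u2 : SC (OutT t1 k1) -> SC u2 -> non_mu u2 ->
  subcontract leb B (OutT t1 k1) u2 ->
  exists t2 k2, u2 = OutT t2 k2 /\ subcontract_rel k1 k2 /\ leb t2 t1.
Proof.
  intros Hu1 Hu2 Hu2m Hsub.
  destruct (subcontract_sole_test (InT t1) (ta := AInT t1) (a1 := AOutT t1) (k1 := k1)
              Hu1 Hu2 Hu2m Hsub) as [a2 [k2 [Hl [Hb Hr]]]].
  - intros rho Hrho. split; [apply SC_prefixes; auto|].
    split; [constructor | intros b r H; inversion H; auto].
  - intros l; simpl; auto.
  - constructor.
  - apply leb_refl.
  - intros k H; inversion H.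
  - intros b k H _; inversion H; auto.
  - destruct a2; simpl in Hb; try contradiction. inversion Hl; subst. eauto.
Qed.

Lemma subcontract_OutS m1 k1 u2 : SC (OutS m1 k1) -> SC u2 -> non_mu u2 ->
  subcontract leb B (OutS m1 k1) u2 ->
  exists m2 k2, u2 = OutS m2 k2 /\ subcontract_rel k1 k2 /\ B m2 m1.
Proof.
  intros Hu1 Hu2 Hu2m Hsub. pose proof (SC_OutS_msg Hu1) as Hm1.
  destruct (subcontract_sole_test (InS m1) (ta := AInS m1) (a1 := AOutS m1) (k1 := k1)
              Hu1 Hu2 Hu2m Hsub) as [a2 [k2 [Hl [Hb Hr]]]].
  - intros rho Hrho. split; [apply SC_prefixes; auto|].
    split; [constructor | intros b r H; inversion H; auto].
  - intros l; simpl; auto.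
  - constructor.
  - apply B_refl; auto.
  - intros k H; inversion H.
  - intros b k H _; inversion H; auto.
  - destruct a2; simpl in Hb; try contradiction. inversion Hl; subst. eauto.
Qed.

Lemma subcontract_InS m1 k1 u2 : SC (InS m1 k1) -> SC u2 -> non_mu u2 ->
  subcontract leb B (InS m1 k1) u2 ->
  exists m2 k2, u2 = InS m2 k2 /\ subcontract_rel k1 k2 /\ B m1 m2.
Proof.
  intros Hu1 Hu2 Hu2m Hsub. pose proof (SC_InS_msg Hu1) as Hm1.
  destruct (subcontract_sole_test (OutS m1) (ta := AOutS m1) (a1 := AInS m1) (k1 := k1)
              Hu1 Hu2 Hu2m Hsub) as [a2 [k2 [Hl [Hb Hr]]]].
  - intros rho Hrho. split; [apply SC_prefixes; auto|].
    split; [constructor | intros b r H; inversion H; auto].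
  - intros l; simpl; auto.
  - constructor.
  - apply B_refl; auto.
  - intros k H; inversion H.
  - intros b k H _; inversion H; auto.
  - destruct a2; simpl in Hb; try contradiction. inversion Hl; subst. eauto.
Qed.

Lemma subcontract_Ext ls1 u2 : SC (Ext ls1) -> SC u2 -> non_mu u2 ->
  subcontract leb B (Ext ls1) u2 ->
  exists ls2, u2 = Ext ls2 /\
    forall l c1, In (l, c1) ls1 -> exists c2, In (l, c2) ls2 /\ subcontract_rel c1 c2.
Proof.
  intros Hu1 Hu2 Hu2m Hsub. destruct (SC_Ext_labels Hu1) as [Hnd1 Hne1].
  assert (G : forall l c1, In (l, c1) ls1 ->
            exists k2, lts u2 (AInL l) k2 /\ subcontract_rel c1 k2).
  { intros l c1 Hi.
    destruct (subcontract_sole_test (fun rho => Int [(l, rho)]) (ta := AOutL l)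
                (a1 := AInL l) (k1 := c1) Hu1 Hu2 Hu2m Hsub) as [a2 [k2 [Hl [Hb Hr]]]].
    - intros rho Hrho. split; [apply SC_Int_single; auto|].
      split; [constructor | intros b r H; apply lts_Int_single_inv in H as [-> ->]; auto].
    - intros l'; simpl; auto.
    - constructor; auto.
    - reflexivity.
    - intros k H. apply lts_Ext_inv in H as [l' [E _]]; discriminate.
    - intros b k H Hb. apply lts_Ext_inv in H as [l' [-> Hi']]. simpl in Hb; subst l'.
      exact (NoDup_fst_In Hnd1 Hi' Hi).
    - destruct a2; simpl in Hb; try contradiction. subst. eauto. }
  destruct ls1 as [|[l0 c0] ls1']; [congruence|].
  destruct (G l0 c0 (or_introl eq_refl)) as [k0 [Hl0 _]].
  inversion Hl0 as [| | | | | | | ls2 ? ? _ |]; subst. exists ls2. split; auto.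
  intros l c1 Hi. destruct (G l c1 Hi) as [c2 [Hl Hr]].
  apply lts_Ext_inv in Hl as [l' [E Hi2]]. inversion E; subst. eauto.
Qed.

Lemma subcontract_One u2 : SC u2 -> non_mu u2 -> subcontract leb B One u2 -> u2 = One.
Proof.
  intros Hu2 Hu2m Hsub. apply complies_One_inv; auto. apply Hsub; [exact SC_One | exact complies_One].
Qed.

(* Clients of [Int ls1] that accept every label, each branch [p] continuing as [F p]. *)
Lemma subcontract_Int_clients ls1 u2 (F : L * C -> C) : SC (Int ls1) -> non_mu u2 ->
  subcontract leb B (Int ls1) u2 ->
  (forall p, In p ls1 -> SC (F p) /\ comp (F p) (snd p)) ->
  exists ls2, u2 = Int ls2 /\
    forall l c2, In (l, c2) ls2 -> exists c1, In (l, c1) ls1 /\ comp (F (l, c1)) c2.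
Proof.
  intros Hu1 Hu2m Hsub HF. destruct (SC_Int_labels Hu1) as [Hnd1 Hne1].
  set (lr := map (fun p => (fst p, F p)) ls1).
  assert (Hlr : forall l r, In (l, r) lr -> exists c1, In (l, c1) ls1 /\ r = F (l, c1)).
  { intros l r H. apply in_map_iff in H as [[l' c'] [E Hi]]. inversion E; subst. eauto. }
  assert (HSr : SC (Ext lr)) by (apply SC_Ext_map; auto; intros p Hp; apply HF; auto).
  assert (Hc : comp (Ext lr) (Int ls1)).
  { apply complies_Ext_Int; auto.
    - intros l c Hi. exists (F (l, c)). apply in_map_iff. exists (l, c); auto.
    - intros l r c Hir Hi. destruct (Hlr l r Hir) as [c' [Hi' ->]].
      rewrite (NoDup_fst_In Hnd1 Hi' Hi). exact (proj2 (HF _ Hi)). }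
  apply Hsub in Hc; auto.
  destruct (complies_Ext_inv Hc Hu2m) as [ls2 [-> H]]. exists ls2. split; auto.
  intros l c2 Hi. destruct (H l c2 Hi) as [r [Hir Hc2]].
  destruct (Hlr l r Hir) as [c1 [Hi1 ->]]. eauto.
Qed.

Lemma subcontract_Int ls1 u2 : SC (Int ls1) -> SC u2 -> non_mu u2 ->
  subcontract leb B (Int ls1) u2 ->
  exists ls2, u2 = Int ls2 /\
    forall l c2, In (l, c2) ls2 -> exists c1, In (l, c1) ls1 /\ subcontract_rel c1 c2.
Proof.
  intros Hu1 Hu2 Hu2m Hsub. destruct (SC_Int_labels Hu1) as [Hnd1 _].
  assert (Hdual : forall p, In p ls1 -> SC (dual (snd p)) /\ comp (dual (snd p)) (snd p)).
  { intros [l c] Hi. pose proof (SC_Int_branch Hu1 Hi).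
    split; [apply SC_dual | apply dual_complies]; auto. }
  destruct (subcontract_Int_clients (fun p => dual (snd p)) Hu1 Hu2m Hsub Hdual) as [ls2 [-> H]].
  exists ls2. split; auto.
  intros l c2 Hi. destruct (H l c2 Hi) as [c1 [Hi1 _]]. exists c1.
  split; [exact Hi1|]. split; [exact (SC_Int_branch Hu1 Hi1)|].
  split; [exact (SC_Int_branch Hu2 Hi)|].
  intros rho Hrho Hcr.
  (* the client that answers the branch [l] with [rho] and every other one dually *)
  set (F := fun p : L * C => if excluded_middle_informative (p = (l, c1)) then rho else dual (snd p)).
  destruct (subcontract_Int_clients F Hu1 Hu2m Hsub) as [ls3 [E3 H3]].
  { intros p Hp. unfold F. destruct (excluded_middle_informative (p = (l, c1))) as [->|]; auto. }
  inversion E3; subst ls3.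
  destruct (H3 l c2 Hi) as [c' [Hi' Hc]].
  rewrite (NoDup_fst_In Hnd1 Hi' Hi1) in Hc. unfold F in Hc.
  destruct (excluded_middle_informative ((l, c1) = (l, c1))); [exact Hc | contradiction].
Qed.

Lemma subcontract_rel_S a b : subcontract_rel a b -> S_fun leb B subcontract_rel a b.
Proof.
  intros [Ha [Hb Hsub]] u1 Hu1.
  assert (Hu1S : SC u1) by exact (SC_unfolds Hu1 Ha).
  destruct (unfolds_total Hb) as [u2 Hu2].
  assert (Hu2S : SC u2) by exact (SC_unfolds Hu2 Hb).
  assert (Hu2m : non_mu u2) by exact (unfolds_non_mu Hu2).
  assert (Hsub' : subcontract leb B u1 u2).
  { intros rho Hrho Hc. apply (complies_unfolds (s := b)); auto.
    apply Hsub; auto. exact (complies_unfolds_inv Hrho Ha Hu1 Hc). }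
  destruct u1; simpl; auto.
  - rewrite <- (subcontract_One Hu2S Hu2m Hsub'). exact Hu2.
  - destruct (subcontract_InT Hu1S Hu2S Hu2m Hsub') as [t2 [k2 [-> H]]]. eauto.
  - destruct (subcontract_OutT Hu1S Hu2S Hu2m Hsub') as [t2 [k2 [-> H]]]. eauto.
  - destruct (subcontract_OutS Hu1S Hu2S Hu2m Hsub') as [m2 [k2 [-> H]]]. eauto.
  - destruct (subcontract_InS Hu1S Hu2S Hu2m Hsub') as [m2 [k2 [-> H]]]. eauto.
  - destruct (subcontract_Ext Hu1S Hu2S Hu2m Hsub') as [ls2 [-> H]]. eauto.
  - destruct (subcontract_Int Hu1S Hu2S Hu2m Hsub') as [ls2 [-> H]]. eauto.
Qed.

End Reflexive.
End Compliance.
End Contracts.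

Theorem mainTheorem5 (BT : Type) (leb : BT -> BT -> Prop) (L : Type)
  (Hleb : PreOrder leb)
  (B : contract BT L -> contract BT L -> Prop)
  (HB : preorder_on_SC B)
  (s1 s2 : contract BT L) :
  SC s1 -> SC s2 -> subcontract leb B s1 s2 -> subcontract_co leb B s1 s2.
Proof.
  intros H1 H2 Hsub. destruct HB as [_ [HBrefl _]].
  exists (subcontract_rel leb B). split; [|split].
  - intros a b [Ha [Hb _]]; auto.
  - intros a b Hab. apply subcontract_rel_S; auto. intros t; reflexivity.
  - split; auto.
Qed.
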